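(* For a shift space $X\subseteq\mathscr{A}^\infty$ over a finite alphabet $\mathscr{A}$ the following conditions are equivalent: (i) there exists a descending sequence $X_1\supseteq X_2\supseteq\cdots$ of topologically mixing sofic shifts such that $X=\bigcap_{n=1}^\infty X_n$ and $\bar d^H(X,X_n)\to 0$ as $n\to\infty$; (ii) $\sigma(X)=X$ and $X$ has the $\bar d$-shadowing property; (iii) $X$ is chain mixing and $\bar d$-approachable.
   Context: $\mathscr{A}^\infty=\mathscr{A}^{\mathbb{N}_0}$, $\sigma$ the left shift; a shift space is a nonempty closed $\sigma$-invariant subset. $\mathcal{L}(X)$ is the set of finite words appearing in elements of $X$, $\mathcal{L}_n(X)$ those of length $n$. $X$ is topologically mixing if for all $u,w\in\mathcal L(X)$ there is $N$ such that for all $n\ge N$ there is $v$ with $|v|=n$ and $uvw\in\mathcal L(X)$; transitive if for all $u,w\in\mathcal L(X)$ there is $v$ with $uvw\in\mathcal L(X)$. A sofic shift is the set of label sequences of infinite paths in a finite edge-labelled directed graph. For $x,y\in\mathscr{A}^\infty$, $\bar d(x,y)=\limsup_{n\to\infty}\frac1n|\{0\le j<n:x_j\ne y_j\}|$; for nonempty $A,B\subseteq\mathscr{A}^\infty$, $\bar d^H(A,B)=\max\{\sup_{a\in A}\inf_{b\in B}\bar d(a,b),\sup_{b\in B}\inf_{a\in A}\bar d(a,b)\}$. The $n$-th Markov approximation $X^M_n$ of $X$ is the shift of finite type of all $x\in\mathscr{A}^\infty$ every subword of length $n+1$ of which lies in $\mathcal L_{n+1}(X)$ (so $\mathcal L_j(X^M_n)=\mathcal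 L_j(X)$ for $j\le n+1$). $X$ is $\bar d$-approachable if $\bar d^H(X^M_n,X)\to0$. $X$ is chain mixing (resp. chain transitive) if $X^M_n$ is topologically mixing (resp. transitive) for all but finitely many $n$. $X$ has the $\bar d$-shadowing property if for every $\varepsilon>0$ there is $N\in\mathbb N$ such that for every sequence $(w^{(j)})_{j\ge1}$ of words in $\mathcal L(X)$ with $|w^{(j)}|\ge N$ for all $j$ there is $x'\in X$ with $\bar d(w^{(1)}w^{(2)}w^{(3)}\cdots,x')<\varepsilon$. *)

From Stdlib Require Import Reals.
From Coquelicot Require Import Coquelicot.
From mathcomp Require Import all_boot.

Set Implicit Arguments.
Unset Strict Implicit.
Unset Printing Implicit Defensive.

Section Shifts.
Variable A : finType.

Definition seqA := nat -> A.
Definition subshift_set := seqA -> Prop.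

Definition shift (x : seqA) : seqA := fun n => x n.+1.

Definition word (x : seqA) (i n : nat) : seq A := mkseq (fun j => x (i + j)%N) n.

(* closed in the product (Tychonoff) topology of the discrete space A:
   x belongs to X as soon as every finite prefix of x is the prefix of
   some element of X *)
Definition closedA (X : subshift_set) : Prop :=
  forall x : seqA,
    (forall n : nat, exists y, X y /\ forall i, (i < n)%N -> y i = x i) -> X x.

Definition shift_space (X : subshift_set) : Prop :=
  (exists x, X x) /\ closedA X /\ (forall x, X x -> X (shift x)).

Definition inL (X : subshift_set) (w : seq A) : Prop :=
  exists x, X x /\ exists i, word x i (size w) = w.

Definition top_mixing (X : subshift_set) : Prop :=
  forall u w, inL X u -> inL X w ->
    exists N, forall n, (N <= n)%N ->
      exists v, size v = n /\ inL X (u ++ v ++ w).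

Definition top_transitive (X : subshift_set) : Prop :=
  forall u w, inL X u -> inL X w -> exists v, inL X (u ++ v ++ w).

(* sofic shift: label sequences of infinite paths in a finite
   edge-labelled directed graph (vertices 'I_nV, edges 'I_nE) *)
Definition sofic_shift (X : subshift_set) : Prop :=
  shift_space X /\
  exists (nV nE : nat) (src tgt : 'I_nE -> 'I_nV) (lab : 'I_nE -> A),
    forall x, X x <->
      exists p : nat -> 'I_nE,
        (forall n, tgt (p n) = src (p n.+1)) /\ (forall n, x n = lab (p n)).

Definition mismatch (x y : seqA) (n : nat) : nat :=
  count (fun j => x j != y j) (iota 0 n).

Definition dbar (x y : seqA) : R :=
  real (LimSup_seq (fun n => Rdiv (INR (mismatch x y n)) (INR n))).

Definition dbar_sup_inf (X Y : subshift_set) : Rbar :=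
  Lub_Rbar (fun r => exists a, X a /\
     r = real (Glb_Rbar (fun s => exists b, Y b /\ s = dbar a b))).

(* Hausdorff dbar distance (all quantities lie in [0,1] for nonempty sets) *)
Definition dbarH (X Y : subshift_set) : R :=
  Rmax (real (dbar_sup_inf X Y)) (real (dbar_sup_inf Y X)).

Definition markov_approx (X : subshift_set) (n : nat) : subshift_set :=
  fun x => forall i, inL X (word x i n.+1).

Definition dbar_approachable (X : subshift_set) : Prop :=
  is_lim_seq (fun n => dbarH (markov_approx X n) X) (Rbar.Finite R0).

Definition chain_mixing (X : subshift_set) : Prop :=
  exists N, forall n, (N <= n)%N -> top_mixing (markov_approx X n).

Definition chain_transitive (X : subshift_set) : Prop :=
  exists N, forall n, (N <= n)%N -> top_transitive (markov_approx X n).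

Definition is_concat (w : nat -> seq A) (x : seqA) : Prop :=
  forall j i, (i < size (w j))%N ->
    x ((\sum_(l < j) size (w l)) + i)%N = nth (x 0%N) (w j) i.

Definition dbar_shadowing (X : subshift_set) : Prop :=
  forall eps : R, Rlt R0 eps ->
    exists N : nat, (0 < N)%N /\
      forall (w : nat -> seq A) (x : seqA),
        (forall j, inL X (w j) /\ (N <= size (w j))%N) ->
        is_concat w x ->
        exists x', X x' /\ Rlt (dbar x x') eps.

End Shifts.

From Stdlib Require Import Reals.
From Coquelicot Require Import Coquelicot.
From mathcomp Require Import all_boot.
From Stdlib Require Import Lra Lia ClassicalEpsilon Classical FunctionalExtensionality.
From mathcomp Require Import zify.

Set Implicit Arguments.
Unset Strict Implicit.
Unset Printing Implicit Defensive.

(* (iii) => (i): the Markov approximations X^M_n are sofic (a de Bruijn-type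
   graph on admissible words), decrease and intersect to X.
   (i) => (ii): a mixing sofic shift has a uniform gap length K (finitely many
   follower/predecessor vertex sets), so concatenations of long X-words are
   within K/N of a point of X_n, hence close to X; surjectivity of the shift
   passes from the mixing X_n to their intersection by pigeonhole.
   (ii) => (iii): a point of X^M_n is a concatenation of X-words, so shadowing
   gives approachability; shadowing a periodic concatenation of two long blocks
   yields a point agreeing with both blocks on full windows of length n+1,
   along which points of X glue into chains of X^M_n of any large length. *)

Section Words.
Variable A : finType.
Implicit Types (X Y : seqA A -> Prop) (x y : seqA A) (u v w : seq A).

Lemma size_word x i n : size (word x i n) = n.
Proof. by rewrite /word size_mkseq. Qed.

Lemma nth_word d x i n j : (j < n)%N -> nth d (word x i n) j = x (i + j)%N.
Proof. by move=> hj; rewrite /word nth_mkseq. Qed.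

Lemma word_ext x y i i' n :
  (forall j, (j < n)%N -> x (i + j)%N = y (i' + j)%N) -> word x i n = word y i' n.
Proof.
move=> h; apply: (@eq_from_nth _ (x 0%N)); rewrite ?size_word // => j hj.
by rewrite !nth_word // h.
Qed.

Lemma word_eq_nth x y i i' n : word x i n = word y i' n ->
  forall j, (j < n)%N -> x (i + j)%N = y (i' + j)%N.
Proof.
move=> e j hj; have := congr1 (fun s => nth (x 0%N) s j) e.
by rewrite !nth_word.
Qed.

Lemma word_cat x i k l : word x i (k + l) = word x i k ++ word x (i + k) l.
Proof.
apply: (@eq_from_nth _ (x 0%N)); rewrite ?size_cat ?size_word // => j hj.
rewrite nth_cat size_word nth_word //; case: ltnP => hjk; first by rewrite nth_word.
by rewrite nth_word; [congr x; lia | lia].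
Qed.

Lemma word_S x i n : word x i n.+1 = x i :: word x i.+1 n.
Proof.
rewrite -add1n word_cat /word /= addn0; congr (_ :: _).
by apply: word_ext => j _; rewrite addn1.
Qed.

Lemma word_rcons x i n : word x i n.+1 = rcons (word x i n) (x (i + n)%N).
Proof. by rewrite -addn1 word_cat cats1 /word /= addn0. Qed.

Definition tail_from x k : seqA A := fun j => x (k + j)%N.

Lemma word_tail_from x k i n : word (tail_from x k) i n = word x (k + i) n.
Proof. by apply: word_ext => j _; rewrite /tail_from addnA. Qed.

Lemma inL_word X x i n : X x -> inL X (word x i n).
Proof. by move=> hx; exists x; split => //; exists i; rewrite size_word. Qed.

Lemma inL_mono X Y w : (forall x, X x -> Y x) -> inL X w -> inL Y w.
Proof. by move=> h [x [hx hi]]; exists x; split => //; apply: h. Qed.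

Lemma inL_nil X : (exists x, X x) -> inL X [::].
Proof. by move=> [x hx]; exists x; split => //; exists 0%N. Qed.

Lemma tail_from_in X x k : shift_space X -> X x -> X (tail_from x k).
Proof.
case=> _ [_ hs] hx; elim: k => [|k IH]; first by have -> : tail_from x 0 = x.
have -> : tail_from x k.+1 = shift (tail_from x k).
  by apply: functional_extensionality => j; rewrite /shift /tail_from addnS.
exact: hs.
Qed.

Lemma inL_point X w : shift_space X -> inL X w ->
  exists y, X y /\ word y 0 (size w) = w.
Proof.
move=> sX [x [hx [i hi]]]; exists (tail_from x i); split; first exact: tail_from_in.
by rewrite word_tail_from addn0.
Qed.

Lemma inL_cat_l X u v : inL X (u ++ v) -> inL X u.
Proof.
move=> [y [hy [j hj]]]; exists y; split => //; exists j.
move: hj; rewrite size_cat word_cat => hj.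
by have := congr1 (take (size u)) hj; rewrite !take_size_cat ?size_word.
Qed.

Lemma inL_cat_r X u v : inL X (u ++ v) -> inL X v.
Proof.
move=> [y [hy [j hj]]]; exists y; split => //; exists (j + size u)%N.
move: hj; rewrite size_cat word_cat => hj.
by have := congr1 (drop (size u)) hj; rewrite !drop_size_cat ?size_word.
Qed.

End Words.

Lemma descending_le (T : Type) (Xs : nat -> T -> Prop) m n x :
  (forall k z, Xs k.+1 z -> Xs k z) -> (m <= n)%N -> Xs n x -> Xs m x.
Proof.
move=> hdesc; elim: n => [|n IH] hmn hx; first by have -> : m = 0%N by lia.
by case: (ltngtP m n.+1) hmn => // [hlt|->] _ //; apply: IH; [lia | exact: hdesc].
Qed.

Section Markov.
Variable A : finType.
Implicit Types (X : seqA A -> Prop) (x y : seqA A).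

Lemma X_sub_markov X n x : X x -> markov_approx X n x.
Proof. by move=> hx i; apply: inL_word. Qed.

Lemma markov_desc X n x : markov_approx X n.+1 x -> markov_approx X n x.
Proof. by move=> h i; have := h i; rewrite -addn1 word_cat; apply: inL_cat_l. Qed.

Lemma markov_tail_from X n x k : markov_approx X n x -> markov_approx X n (tail_from x k).
Proof. by move=> h i; rewrite word_tail_from. Qed.

Lemma markov_shift_space X n : shift_space X -> shift_space (markov_approx X n).
Proof.
move=> [[x hx] _]; split; first by exists x; apply: X_sub_markov.
split; last by move=> y h i; rewrite (_ : word _ i _ = word y i.+1 n.+1) //; apply: word_ext.
move=> x' h i; have [y [hy hxy]] := h (i + n.+1)%N.
rewrite (_ : word x' i n.+1 = word y i n.+1); first exact: hy.
by apply: word_ext => j hj; rewrite hxy //; lia.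
Qed.

Lemma X_inter_markov X x : shift_space X -> X x <-> forall n, markov_approx X n x.
Proof.
move=> sX; split; first by move=> hx n; apply: X_sub_markov.
move=> h; have [_ [cX _]] := sX; apply: cX => n.
have [y [hy hw]] := inL_point sX (h n 0%N); exists y; split => // i hi.
by move: hw; rewrite size_word => /word_eq_nth /(_ i (ltnW hi)); rewrite !add0n.
Qed.

(* Gluing: follow y1 up to position p + n, then continue with y2 shifted by p.
   When y1 and y2 overlap on a window of length n + 1 starting at p, every
   (n+1)-word of the glued sequence is a word of y1 or of y2. *)
Definition glue (y1 y2 : seqA A) (p n : nat) : seqA A :=
  fun k => if (k <= p + n)%N then y1 k else y2 (k - p)%N.

Definition overlap (y1 y2 : seqA A) (p n : nat) : Prop :=
  forall t, (t <= n)%N -> y1 (p + t)%N = y2 t.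

Lemma glue_left y1 y2 p n k : (k <= p + n)%N -> glue y1 y2 p n k = y1 k.
Proof. by move=> h; rewrite /glue ifT. Qed.

Lemma glue_right y1 y2 p n k : (p <= k)%N -> overlap y1 y2 p n ->
  glue y1 y2 p n k = y2 (k - p)%N.
Proof.
move=> h hov; rewrite /glue; case: ifP => // hk.
by rewrite -hov; [congr y1 | ]; lia.
Qed.

Lemma glue_markov X n y1 y2 p :
  markov_approx X n y1 -> markov_approx X n y2 -> overlap y1 y2 p n ->
  markov_approx X n (glue y1 y2 p n).
Proof.
move=> h1 h2 hov i; case: (leqP i p) => hip.
  rewrite (_ : word _ i _ = word y1 i n.+1); first exact: h1.
  by apply: word_ext => j hj; rewrite glue_left //; lia.
rewrite (_ : word _ i _ = word y2 (i - p) n.+1); first exact: h2.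
by apply: word_ext => j hj; rewrite glue_right //; [congr y2 | ]; lia.
Qed.

End Markov.
Definition propb (P : Prop) : bool := if excluded_middle_informative P then true else false.

Lemma propbP (P : Prop) : reflect P (propb P).
Proof. by rewrite /propb; case: excluded_middle_informative => h; constructor. Qed.

(* The n-th Markov approximation of a shift space is sofic: it is presented by
   the de Bruijn-type graph whose edges are the (k+1)-words, an admissible word
   leading from its prefix of length k to its suffix of length k and carrying
   its first letter.  Inadmissible words are edges between two extra vertices
   (Some None and None) that no infinite path can traverse. *)
Section MarkovSofic.
Variables (A : finType) (X : seqA A -> Prop) (k : nat).

Local Notation edge := ((k.+1).-tuple A).
Local Notation vertex := (option (option (k.-tuple A))).

Definition admissible (t : edge) : bool := propb (inL X t).

Definition prefix_k (t : edge) : k.-tuple A := belast_tuple (thead t) (behead_tuple t).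
Definition suffix_k (t : edge) : k.-tuple A := behead_tuple t.

Definition edge_src (t : edge) : vertex :=
  if admissible t then Some (Some (prefix_k t)) else Some None.
Definition edge_tgt (t : edge) : vertex :=
  if admissible t then Some (Some (suffix_k t)) else None.

Definition gsrc (e : 'I_#|{: edge}|) : 'I_#|{: vertex}| := enum_rank (edge_src (enum_val e)).
Definition gtgt (e : 'I_#|{: edge}|) : 'I_#|{: vertex}| := enum_rank (edge_tgt (enum_val e)).
Definition glab (e : 'I_#|{: edge}|) : A := thead (enum_val e).

Definition edge_at (x : seqA A) n : edge :=
  @Tuple _ _ (word x n k.+1) (introT eqP (size_word x n k.+1)).

Lemma thead_edge_at x n : thead (edge_at x n) = x n.
Proof. by rewrite /thead (tnth_nth (x 0%N)) nth_word // addn0. Qed.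

Lemma suffix_prefix_edge_at x n : suffix_k (edge_at x n) = prefix_k (edge_at x n.+1).
Proof.
apply: val_inj.
change (behead (word x n k.+1) =
        belast (thead (edge_at x n.+1)) (behead (word x n.+1 k.+1))).
rewrite thead_edge_at !word_S /=.
have := lastI (x n.+1) (word x n.+2 k).
by rewrite -word_S word_rcons => /rcons_inj [].
Qed.

Lemma nth_prefix_k d (t : edge) i : (i < k)%N -> nth d (prefix_k t) i = nth d t i.
Proof.
move=> hi; have e : thead t :: behead t = t :> seq A.
  by case: t => [[|a s] /= hs] //; rewrite /thead (tnth_nth a).
by rewrite /= -[in RHS]e lastI nth_rcons size_belast size_behead size_tuple /= hi.
Qed.

Lemma path_edges (p : nat -> 'I_#|{: edge}|) n :
  gtgt (p n) = gsrc (p n.+1) ->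
  [/\ admissible (enum_val (p n)), admissible (enum_val (p n.+1)) &
      suffix_k (enum_val (p n)) = prefix_k (enum_val (p n.+1))].
Proof.
move/enum_rank_inj; rewrite /edge_tgt /edge_src.
by do 2 case: admissible => //; case=> e; split => //; apply: val_inj.
Qed.

Lemma path_reads_edges (t : nat -> edge) (x : seqA A) :
  (forall n, suffix_k (t n) = prefix_k (t n.+1)) -> (forall n, x n = thead (t n)) ->
  forall n, tval (t n) = word x n k.+1.
Proof.
move=> hov hl.
have hnth : forall i n, (i <= k)%N -> nth (x 0%N) (t n) i = x (n + i)%N.
  elim => [|i IH] n hi; first by rewrite addn0 (hl n) /thead (tnth_nth (x 0%N)).
  rewrite -nth_behead -[behead _]/(tval (suffix_k (t n))) hov nth_prefix_k //.
  by rewrite IH ?addSnnS //; lia.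
move=> n; apply: (@eq_from_nth _ (x 0%N)); rewrite ?size_tuple ?size_word // => i hi.
by rewrite nth_word // hnth //; lia.
Qed.

Lemma markov_sofic : shift_space X -> sofic_shift (markov_approx X k).
Proof.
move=> sX; split; first exact: markov_shift_space.
exists #|{: vertex}|, #|{: edge}|, gsrc, gtgt, glab => x; split.
  move=> hx; exists (fun n => enum_rank (edge_at x n)); split => n.
    by rewrite /gsrc /gtgt !enum_rankK /edge_src /edge_tgt /admissible
      !(introT (propbP _) (hx _)) suffix_prefix_edge_at.
  by rewrite /glab enum_rankK thead_edge_at.
move=> [p [hc hl]] n; have [hgood _ _] := path_edges (hc n).
rewrite -(@path_reads_edges (fun n => enum_val (p n)) x) //; first exact/propbP.
by move=> m; have [_ _ ->] := path_edges (hc m).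
Qed.

End MarkovSofic.
Section Dbar.
Local Open Scope R_scope.
Variable A : finType.
Implicit Types (x y z : seqA A).

Definition mismatch_in x y s l : nat := count (fun j => x j != y j) (iota s l).

Lemma mismatch_le x y n : (mismatch x y n <= n)%N.
Proof. by have := count_size (fun j => x j != y j) (iota 0 n); rewrite size_iota. Qed.

Lemma mismatch_add x y a b :
  mismatch x y (a + b) = (mismatch x y a + mismatch_in x y a b)%N.
Proof. by rewrite /mismatch iotaD count_cat. Qed.

Lemma mismatch_in_sub x y s l s' l' : (s <= s')%N -> (s' + l' <= s + l)%N ->
  (mismatch_in x y s' l' <= mismatch_in x y s l)%N.
Proof.
move=> h1 h2; rewrite /mismatch_in.
rewrite (_ : l = (s' - s) + (l' + (s + l - (s' + l'))))%N; last by lia.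
rewrite iotaD iotaD count_cat count_cat (_ : (s + (s' - s))%N = s') //; lia.
Qed.

Lemma mismatch_mono x y m n : (m <= n)%N -> (mismatch x y m <= mismatch x y n)%N.
Proof. by move=> h; rewrite (_ : n = m + (n - m))%N ?mismatch_add; lia. Qed.

Lemma mismatch_tri x y z n :
  (mismatch x z n <= mismatch x y n + mismatch y z n)%N.
Proof.
rewrite /mismatch; elim: (iota 0 n) => //= j s IH.
have : ((x j != z j) <= (x j != y j) + (y j != z j))%N.
  case: (x j =P z j) => [_|hxz] //; case: (x j =P y j) => [hxy|] //.
  by case: (y j =P z j) => [hyz|] //; case: hxz; rewrite hxy hyz.
lia.
Qed.

Lemma mismatch_refl x n : mismatch x x n = 0%N.
Proof. by rewrite /mismatch (eq_count (a2 := pred0)) ?count_pred0 // => j; rewrite eqxx. Qed.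

Definition ratio x y (n : nat) : R := INR (mismatch x y n) / INR n.

Lemma ratio_bounds x y n : 0 <= ratio x y n <= 1.
Proof.
rewrite /ratio; case: n => [|n]; first by rewrite /mismatch /= /Rdiv Rmult_0_l; lra.
have hn : 0 < INR n.+1 by apply: lt_0_INR; lia.
have hle : INR (mismatch x y n.+1) <= INR n.+1 by apply: le_INR; apply/leP; exact: mismatch_le.
split; first by apply: Rdiv_le_0_compat => //; apply: pos_INR.
by apply: (Rmult_le_reg_r (INR n.+1)) => //; rewrite /Rdiv Rmult_assoc Rinv_l; lra.
Qed.

Lemma LimSup_ratio x y :
  LimSup_seq (ratio x y) = Rbar.Finite (dbar x y) /\ 0 <= dbar x y <= 1.
Proof.
have h0 : Rbar_le (Rbar.Finite 0) (LimSup_seq (ratio x y)).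
  rewrite -(LimSup_seq_const 0); apply: LimSup_le; exists 0%N => n _.
  by case: (ratio_bounds x y n).
have h1 : Rbar_le (LimSup_seq (ratio x y)) (Rbar.Finite 1).
  rewrite -(LimSup_seq_const 1); apply: LimSup_le; exists 0%N => n _.
  by case: (ratio_bounds x y n).
by rewrite /dbar -/(ratio x y); case: (LimSup_seq (ratio x y)) h0 h1.
Qed.

Lemma dbar_bounds x y : 0 <= dbar x y <= 1.
Proof. exact: (LimSup_ratio x y).2. Qed.

Lemma is_LimSup_ratio x y : is_LimSup_seq (ratio x y) (Rbar.Finite (dbar x y)).
Proof. by rewrite -(LimSup_ratio x y).1 /LimSup_seq; case: ex_LimSup_seq. Qed.

Lemma ratio_eventually_lt x y eps : 0 < eps ->
  exists N, forall n, (N <= n)%N -> ratio x y n < dbar x y + eps.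
Proof.
move=> he; have [_ [N hN]] := is_LimSup_ratio x y (mkposreal _ he).
by exists N => n hn; apply: hN; apply/leP.
Qed.

Lemma dbar_le_eventually x y c :
  (forall eps, 0 < eps -> exists N, forall n, (N <= n)%N -> ratio x y n <= c + eps) ->
  dbar x y <= c.
Proof.
move=> h; apply: Rnot_lt_le => hlt.
have he : 0 < (dbar x y - c) / 2 by lra.
have [N hN] := h _ he.
have [hinf _] := is_LimSup_ratio x y (mkposreal _ he).
have [n [hn hu]] := hinf N.
by have := hN n (introT leP hn); rewrite /=in hu; lra.
Qed.

Lemma dbar_le_affine x y c K : 0 <= c ->
  (forall n, (0 < n)%N -> INR (mismatch x y n) <= c * INR n + INR K) ->
  dbar x y <= c.
Proof.
move=> hc h; apply: dbar_le_eventually => eps he.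
have [N hN] := INR_archimed eps (INR K) he.
exists N.+1 => n hn.
have hn0 : 0 < INR n by apply: lt_0_INR; lia.
have hNn : INR N <= INR n by apply: le_INR; lia.
have hm := h n ltac:(lia).
apply: (Rmult_le_reg_r (INR n)) => //.
rewrite /ratio /Rdiv Rmult_assoc Rinv_l ?Rmult_1_r; nra.
Qed.

Lemma dbar_tri x y z : dbar x z <= dbar x y + dbar y z.
Proof.
apply: dbar_le_eventually => eps he.
have [N1 h1] := @ratio_eventually_lt x y (eps / 2) ltac:(lra).
have [N2 h2] := @ratio_eventually_lt y z (eps / 2) ltac:(lra).
exists (maxn N1 N2) => n hn.
have := h1 n ltac:(lia); have := h2 n ltac:(lia).
case: n hn => [|n] hn; first by rewrite /ratio /mismatch /= /Rdiv !Rmult_0_l; lra.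
have hn' : 0 < / INR n.+1 by apply: Rinv_0_lt_compat; apply: lt_0_INR; lia.
have : INR (mismatch x z n.+1) <= INR (mismatch x y n.+1) + INR (mismatch y z n.+1).
  by rewrite -plus_INR; apply: le_INR; apply/leP; exact: mismatch_tri.
rewrite /ratio /Rdiv; nra.
Qed.

Lemma dbar_refl x : dbar x x = 0.
Proof.
suff : dbar x x <= 0 by have := dbar_bounds x x; lra.
apply: dbar_le_eventually => eps he; exists 0%N => n _.
by rewrite /ratio mismatch_refl /= /Rdiv Rmult_0_l; lra.
Qed.

End Dbar.

Section HausdorffDbar.
Local Open Scope R_scope.
Variable A : finType.
Implicit Types (X Y : seqA A -> Prop) (x y : seqA A).

Definition dist_to x Y : Rbar := Glb_Rbar (fun s => exists b, Y b /\ s = dbar x b).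

Lemma dist_to_fin x Y : (exists b, Y b) ->
  dist_to x Y = Rbar.Finite (real (dist_to x Y)) /\ 0 <= real (dist_to x Y) <= 1.
Proof.
move=> [b hb]; have [hlb hg] := Glb_Rbar_correct (fun s => exists b, Y b /\ s = dbar x b).
have h1 : Rbar_le (dist_to x Y) (Rbar.Finite 1).
  apply: (Rbar_le_trans _ _ _ (hlb (dbar x b) (ex_intro _ b (conj hb erefl)))).
  by have := dbar_bounds x b; rewrite /=; lra.
have h0 : Rbar_le (Rbar.Finite 0) (dist_to x Y).
  by apply: hg => s [b' [_ ->]]; have := dbar_bounds x b'; rewrite /=; lra.
by case: (dist_to x Y) h0 h1.
Qed.

Lemma dist_to_le x Y b : Y b -> real (dist_to x Y) <= dbar x b.
Proof.
move=> hb; have [hf _] := dist_to_fin x (ex_intro _ b hb).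
have [hlb _] := Glb_Rbar_correct (fun s => exists b, Y b /\ s = dbar x b).
by have := hlb (dbar x b) (ex_intro _ b (conj hb erefl)); rewrite -/(dist_to x Y) hf.
Qed.

Lemma dist_to_lt x Y c : (exists b, Y b) -> real (dist_to x Y) < c ->
  exists b, Y b /\ dbar x b < c.
Proof.
move=> hne hlt; apply: NNPP => hno.
have [hf _] := dist_to_fin x hne.
have [_ hg] := Glb_Rbar_correct (fun s => exists b, Y b /\ s = dbar x b).
have : Rbar_le (Rbar.Finite c) (dist_to x Y).
  apply: hg => s [b [hb ->]] /=; apply: Rnot_lt_le => hh; apply: hno; by exists b.
by rewrite hf /=; lra.
Qed.

Lemma sup_inf_fin X Y : (exists a, X a) -> (exists b, Y b) ->
  dbar_sup_inf X Y = Rbar.Finite (real (dbar_sup_inf X Y)) /\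
  0 <= real (dbar_sup_inf X Y) <= 1.
Proof.
move=> [a ha] hY.
have [hub hl] := Lub_Rbar_correct (fun r => exists a, X a /\ r = real (dist_to a Y)).
have h0 : Rbar_le (Rbar.Finite 0) (dbar_sup_inf X Y).
  apply: (Rbar_le_trans _ _ _ _ (hub _ (ex_intro _ a (conj ha erefl)))).
  by have := (dist_to_fin a hY).2; rewrite /=; lra.
have h1 : Rbar_le (dbar_sup_inf X Y) (Rbar.Finite 1).
  by apply: hl => r [a' [_ ->]] /=; have := (dist_to_fin a' hY).2; lra.
by case: (dbar_sup_inf X Y) h0 h1.
Qed.

Lemma sup_inf_ge X Y a : X a -> (exists b, Y b) ->
  real (dist_to a Y) <= real (dbar_sup_inf X Y).
Proof.
move=> ha hY; have [hf _] := sup_inf_fin (ex_intro _ a ha) hY.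
have [hub _] := Lub_Rbar_correct (fun r => exists a, X a /\ r = real (dist_to a Y)).
by have := hub _ (ex_intro _ a (conj ha erefl)); rewrite -/(dbar_sup_inf X Y) hf.
Qed.

Lemma sup_inf_le X Y c : (exists a, X a) -> (exists b, Y b) ->
  (forall a, X a -> real (dist_to a Y) <= c) -> real (dbar_sup_inf X Y) <= c.
Proof.
move=> hX hY h; have [hf _] := sup_inf_fin hX hY.
have [_ hl] := Lub_Rbar_correct (fun r => exists a, X a /\ r = real (dist_to a Y)).
have : Rbar_le (dbar_sup_inf X Y) (Rbar.Finite c) by apply: hl => r [a [ha ->]]; apply: h.
by rewrite hf.
Qed.

Lemma dbarH_sym X Y : dbarH X Y = dbarH Y X.
Proof. by rewrite /dbarH Rmax_comm. Qed.

Lemma dbarH_ge0 X Y : (exists a, X a) -> (exists b, Y b) -> 0 <= dbarH X Y.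
Proof.
move=> hX hY; have := (sup_inf_fin hX hY).2.
by rewrite /dbarH => h; apply: Rle_trans (Rmax_l _ _); lra.
Qed.

Lemma dbarH_close X Y y c : (exists a, X a) -> Y y -> dbarH X Y < c ->
  exists x, X x /\ dbar y x < c.
Proof.
move=> hX hy hH; apply: dist_to_lt => //.
by apply: Rle_lt_trans hH; apply: Rle_trans (Rmax_r _ _); exact: sup_inf_ge.
Qed.

Lemma dbarH_le X Y c : (exists a, X a) -> (exists b, Y b) ->
  (forall a, X a -> exists b, Y b /\ dbar a b <= c) ->
  (forall b, Y b -> exists a, X a /\ dbar b a <= c) ->
  dbarH X Y <= c.
Proof.
move=> hX hY h1 h2; apply: Rmax_lub; apply: sup_inf_le => // a ha.
  by have [b [hb hle]] := h1 a ha; apply: Rle_trans hle; exact: dist_to_le.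
by have [b [hb hle]] := h2 a ha; apply: Rle_trans hle; exact: dist_to_le.
Qed.

End HausdorffDbar.

(* (iii) implies (i): the Markov approximations beyond the chain mixing
   threshold form the required sequence of mixing sofic shifts. *)
Lemma iii_to_i (A : finType) (X : seqA A -> Prop) : shift_space X ->
  chain_mixing X /\ dbar_approachable X ->
  exists Xs : nat -> (seqA A -> Prop),
      (forall n, sofic_shift (Xs n) /\ top_mixing (Xs n)) /\
      (forall n x, Xs n.+1 x -> Xs n x) /\
      (forall x, X x <-> forall n, Xs n x) /\
      is_lim_seq (fun n => dbarH X (Xs n)) (Rbar.Finite R0).
Proof.
move=> sX [[N hmix] happ].
exists (fun n => markov_approx X (n + N)); split; [|split; [|split]].
- by move=> n; split; [exact: markov_sofic | apply: hmix; lia].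
- by move=> n x; rewrite addSn; apply: markov_desc.
- move=> x; rewrite X_inter_markov //; split => h n; first exact: h.
  by apply: (@descending_le _ (markov_approx X) n (n + N)) => //; [exact: markov_desc | lia].
- by have := proj1 (is_lim_seq_incr_n _ N _) happ; apply: is_lim_seq_ext => n; rewrite dbarH_sym.
Qed.
Lemma fin_uniform_bound (T : finType) (Q : T -> nat -> Prop) :
  (forall t N N', (N <= N')%N -> Q t N -> Q t N') ->
  (forall t, exists N, Q t N) -> exists K, forall t, Q t K.
Proof.
move=> hmono h.
pose f t := proj1_sig (constructive_indefinite_description _ (h t)).
have hf t : Q t (f t) by rewrite /f; case: constructive_indefinite_description.
by exists (\max_t f t) => t; apply: hmono (hf t); exact: leq_bigmax.
Qed.

Lemma fin_pigeonhole (T : finType) (P : nat -> T -> Prop) :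
  (forall k, exists a, P k a) -> (forall k k' a, (k' <= k)%N -> P k a -> P k' a) ->
  exists a, forall k, P k a.
Proof.
move=> hex hmono; apply: NNPP => hno.
have h a : exists k, ~ P k a.
  by apply: NNPP => hk; apply: hno; exists a => k; apply: NNPP => hk'; apply: hk; exists k.
have [K hK] := @fin_uniform_bound T (fun a N => ~ P N a)
  (fun a N N' hNN' hN hP => hN (hmono _ _ _ hNN' hP)) h.
by have [a ha] := hex K; exact: hK a ha.
Qed.

Section Preimages.
Variable A : finType.
Implicit Types (X Y : seqA A -> Prop) (x : seqA A) (w : seq A).

Definition consA (c : A) x : seqA A := fun k => if k is k'.+1 then x k' else c.

Lemma shift_consA c x : shift (consA c x) = x.
Proof. by apply: functional_extensionality. Qed.

Lemma word_consA c x k : word (consA c x) 0 k.+1 = c :: word x 0 k.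
Proof. by rewrite word_S; congr (_ :: _); apply: word_ext. Qed.

Lemma mixing_left_extension Y w : shift_space Y -> top_mixing Y -> inL Y w ->
  exists c, inL Y (c :: w).
Proof.
move=> sY hm hw; have [M hM] := hm [::] w (inL_nil sY.1) hw.
have [[|c0 s] [//= _ hvw]] := hM M.+1 (leqnSn M).
exists (last c0 s); move: hvw; rewrite /= -cat_cons lastI -cats1 -catA cat1s.
exact: inL_cat_r.
Qed.

(* Hence every point of a mixing shift space has a preimage under the shift;
   the extending letter is found by pigeonhole and closedness. *)
Lemma mixing_preimage Y x : shift_space Y -> top_mixing Y -> Y x ->
  exists c, Y (consA c x).
Proof.
move=> sY hm hx.
have hmono k k' a : (k' <= k)%N -> inL Y (a :: word x 0 k) -> inL Y (a :: word x 0 k').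
  move=> hkk'; rewrite (_ : k = k' + (k - k'))%N; last by lia.
  by rewrite word_cat -cat_cons => /inL_cat_l.
have [c hc] := @fin_pigeonhole A (fun k c => inL Y (c :: word x 0 k))
   (fun k => mixing_left_extension sY hm (inL_word 0%N k hx)) hmono.
exists c; have [_ [cY _]] := sY; apply: cY => -[|k]; first by have [y hy] := sY.1; exists y.
have [y [hy hw]] := inL_point sY (hc k); exists y; split => // i hi.
move: hw; rewrite /= size_word -word_consA => /word_eq_nth /(_ i hi).
by rewrite !add0n.
Qed.

(* The intersection of a descending sequence of mixing shift spaces is
   mapped onto itself by the shift (pigeonhole on the preimage letter). *)
Lemma inter_mixing_onto X (Xs : nat -> seqA A -> Prop) :
  shift_space X ->
  (forall n, shift_space (Xs n) /\ top_mixing (Xs n)) ->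
  (forall n x, Xs n.+1 x -> Xs n x) ->
  (forall x, X x <-> forall n, Xs n x) ->
  forall x, X x <-> exists y, X y /\ shift y = x.
Proof.
move=> sX hs hdesc hX x; split; last by move=> [y [hy <-]]; have [_ [_ hsh]] := sX; apply: hsh.
move=> hx.
have hpre n : exists c, Xs n (consA c x).
  by have [sY hmix] := hs n; apply: mixing_preimage => //; move: hx; rewrite hX.
have [c hc] := @fin_pigeonhole A (fun n c => Xs n (consA c x)) hpre
  (fun k k' a hle => descending_le hdesc hle).
by exists (consA c x); split; [rewrite hX | exact: shift_consA].
Qed.

End Preimages.
(* A word u only
   matters through the set of vertices at which paths reading u can end, and
   a word w through the set of vertices from which paths reading w can start;
   there are finitely many such pairs of sets, so finitely many mixing bounds
   suffice. *)
Section SoficGap.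
Variables (A : finType) (Y : seqA A -> Prop).
Variables (nV nE : nat) (src tgt : 'I_nE -> 'I_nV) (lab : 'I_nE -> A).
Hypothesis hY : forall x, Y x <-> exists p : nat -> 'I_nE,
        (forall n, tgt (p n) = src (p n.+1)) /\ (forall n, x n = lab (p n)).
Implicit Types (u v w : seq A).

Definition is_path (p : nat -> 'I_nE) := forall n, tgt (p n) = src (p n.+1).
Definition labels (p : nat -> 'I_nE) : seqA A := fun n => lab (p n).

Lemma inL_path u : inL Y u -> exists p i, is_path p /\ word (labels p) i (size u) = u.
Proof.
move=> [y [hy [i hi]]]; have [p [hp hl]] := (hY y).1 hy.
by exists p, i; split => //; rewrite -[in RHS]hi; apply: word_ext => j _; rewrite hl.
Qed.

Definition end_vertices u : {ffun 'I_nV -> bool} := [ffun a => propb (exists p i,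
  is_path p /\ word (labels p) i (size u) = u /\ src (p (i + size u)%N) = a)].
Definition start_vertices w : {ffun 'I_nV -> bool} := [ffun a => propb (exists p,
  is_path p /\ word (labels p) 0 (size w) = w /\ src (p 0%N) = a)].

Definition splice (p1 p2 : nat -> 'I_nE) (s t : nat) : nat -> 'I_nE :=
  fun j => if (j < s)%N then p1 j else p2 (j - s + t)%N.

Lemma splice_left p1 p2 s t j : (j < s)%N -> splice p1 p2 s t j = p1 j.
Proof. by rewrite /splice => ->. Qed.

Lemma splice_right p1 p2 s t j : (s <= j)%N -> splice p1 p2 s t j = p2 (j - s + t)%N.
Proof. by rewrite /splice ltnNge => ->. Qed.

Lemma splice_path p1 p2 s t : is_path p1 -> is_path p2 -> src (p1 s) = src (p2 t) ->
  is_path (splice p1 p2 s t).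
Proof.
move=> h1 h2 e n; case: (ltnP n.+1 s) => hn; first by rewrite !splice_left ?h1 //; lia.
case: (ltnP n s) => hn'.
  have hs : s = n.+1 by lia.
  by rewrite splice_left // splice_right hs ?subnn //; rewrite hs in e; rewrite h1 e.
by rewrite !splice_right ?h2; [congr (src (p2 _)) | |]; lia.
Qed.

Lemma transplant u0 v w0 u w : inL Y (u0 ++ v ++ w0) ->
  end_vertices u = end_vertices u0 -> start_vertices w = start_vertices w0 ->
  inL Y (u ++ v ++ w).
Proof.
move=> hL hend hstart.
have [q [i [hq hw]]] := inL_path hL.
move: hw; rewrite !size_cat !word_cat => /eqP; rewrite !eqseq_cat ?size_cat ?size_word //.
move=> /and3P [/eqP hw1 /eqP hw2 /eqP hw3].
have : end_vertices u0 (src (q (i + size u0)%N)).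
  by rewrite ffunE; apply/propbP; exists q, i; rewrite hw1.
rewrite -hend ffunE => /propbP [p1 [i1 [hp1 [hu ha]]]].
set s2 := (i + size u0 + size v)%N.
have : start_vertices w0 (src (q s2)).
  rewrite ffunE; apply/propbP; exists (fun j => q (s2 + j)%N); split.
    by move=> n; rewrite hq addnS.
  by rewrite addn0; split => //; rewrite -[in RHS]hw3; apply: word_ext => j _.
rewrite -hstart ffunE => /propbP [p2 [hp2 [hw' hb]]].
set inner := splice q p2 s2 0.
have hinner : is_path inner by apply: splice_path => //; rewrite hb.
set r := splice p1 inner (i1 + size u) (i + size u0).
have hr : is_path r.
  apply: splice_path => //; rewrite ha /inner.
  case: (ltnP (i + size u0) s2) => h; first by rewrite splice_left.
  have e : (i + size u0)%N = s2 by rewrite /s2 in h *; lia.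
  by rewrite splice_right e ?subnn ?hb.
exists (labels r); split; first by apply/hY; exists r.
exists i1; rewrite !size_cat !word_cat; congr (_ ++ _ ++ _).
- rewrite -[in RHS]hu; apply: word_ext => j hj.
  by rewrite /labels /r splice_left //; lia.
- rewrite -[in RHS]hw2; apply: word_ext => j hj.
  rewrite /labels /r splice_right; last by lia.
  by rewrite /inner splice_left; [congr (lab (q _)) |]; lia.
- rewrite -[in RHS]hw'; apply: word_ext => j hj.
  rewrite /labels /r splice_right; last by lia.
  by rewrite /inner splice_right; [congr (lab (p2 _)) |]; lia.
Qed.

(* The uniform gap, from finitely many mixing bounds (one per pair of vertex sets). *)
Lemma mixing_sofic_uniform_gap : top_mixing Y -> exists K, forall u w,
  inL Y u -> inL Y w -> exists v, size v = K /\ inL Y (u ++ v ++ w).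
Proof.
move=> hm.
pose Q tau N := forall m, (N <= m)%N ->
  forall u w, inL Y u -> inL Y w -> (end_vertices u, start_vertices w) = tau ->
  exists v, size v = m /\ inL Y (u ++ v ++ w).
have hmono t N N' : (N <= N')%N -> Q t N -> Q t N' by move=> hle h m hm'; apply: h; lia.
have hex t : exists N, Q t N.
  case: (classic (exists u0 w0, inL Y u0 /\ inL Y w0 /\
                    (end_vertices u0, start_vertices w0) = t)); last first.
    by move=> hno; exists 0%N => m _ u w hu hw ht; case: hno; exists u, w.
  move=> [u0 [w0 [hu0 [hw0 <-]]]]; have [N hN] := hm u0 w0 hu0 hw0.
  exists N => m hNm u w hu hw [he hs]; have [v [hv hL]] := hN m hNm.
  by exists v; split => //; apply: transplant hL he hs.
have [K hK] := fin_uniform_bound hmono hex.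
by exists K => u w hu hw; exact: (hK _ K (leqnn K) u w hu hw erefl).
Qed.

End SoficGap.
(* Shadowing in a shift space Y with uniform gap length K: given words w j of
   the language of X (contained in Y), each of length at least N > K, drop the
   last K letters of each block and refill them by gap words of length K; the
   result is a point of Y which differs from the concatenation x at most K
   times per block, hence dbar x y <= K / N. *)
Section GapShadowing.
Variable A : finType.
Variables (X Y : seqA A -> Prop) (K N : nat) (w : nat -> seq A) (x : seqA A).
Hypotheses (hXY : forall z, X z -> Y z) (sY : shift_space Y)
  (hgap : forall u v, inL Y u -> inL Y v -> exists g, size g = K /\ inL Y (u ++ g ++ v))
  (hKN : (K < N)%N) (hw : forall j, inL X (w j) /\ (N <= size (w j))%N)
  (hcat : is_concat w x).

Definition truncated j := take (size (w j) - K) (w j).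

Lemma truncated_in j : inL Y (truncated j).
Proof.
have := inL_mono hXY (hw j).1; rewrite -(cat_take_drop (size (w j) - K) (w j)).
exact: inL_cat_l.
Qed.

Lemma size_truncated j : size (truncated j) = (size (w j) - K)%N.
Proof. by rewrite size_take; have := (hw j).2; case: ltnP => //; lia. Qed.

Definition gap_word (z u : seq A) : seq A :=
  match excluded_middle_informative (exists g, size g = K /\ inL Y (z ++ g ++ u)) with
  | left h => proj1_sig (constructive_indefinite_description _ h)
  | right _ => nseq K (x 0%N)
  end.

Lemma gap_word_spec z u : inL Y z -> inL Y u ->
  size (gap_word z u) = K /\ inL Y (z ++ gap_word z u ++ u).
Proof.
move=> hz hu; rewrite /gap_word; case: excluded_middle_informative => [h|h].
  by case: constructive_indefinite_description.
by case: h; apply: hgap.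
Qed.

Fixpoint joined j : seq A :=
  if j is j'.+1 then joined j' ++ gap_word (joined j') (truncated j) ++ truncated j
  else truncated 0.

Definition block_start j := (\sum_(l < j) size (w l))%N.

Lemma block_startS j : block_start j.+1 = (block_start j + size (w j))%N.
Proof. by rewrite /block_start big_ord_recr. Qed.

Lemma block_start_ge j : (j * N <= block_start j)%N.
Proof. by elim: j => [|j IH] //; rewrite block_startS mulSnr; have := (hw j).2; lia. Qed.

Lemma joined_spec j :
  inL Y (joined j) /\ size (joined j) = (block_start j + size (w j) - K)%N.
Proof.
elim: j => [|j [IH1 IH2]].
  by split; [exact: truncated_in | rewrite size_truncated /block_start big_ord0].
have [hg1 hg2] := gap_word_spec IH1 (truncated_in j.+1).
split => //=; rewrite !size_cat IH2 hg1 size_truncated block_startS.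
by have := (hw j).2; have := (hw j.+1).2; lia.
Qed.

Lemma joined_last j : exists pre, joined j = pre ++ truncated j /\ size pre = block_start j.
Proof.
case: j => [|j]; first by exists [::]; split => //; rewrite /block_start big_ord0.
exists (joined j ++ gap_word (joined j) (truncated j.+1)); split; first by rewrite /= catA.
have [hg1 _] := gap_word_spec (joined_spec j).1 (truncated_in j.+1).
by rewrite size_cat (joined_spec j).2 hg1 block_startS; have := (hw j).2; lia.
Qed.

Lemma joined_prefix j e : exists s, joined (j + e) = joined j ++ s.
Proof.
elim: e => [|e [s hs]]; first by exists [::]; rewrite addn0 cats0.
exists (s ++ gap_word (joined (j + e)) (truncated (j + e).+1) ++ truncated (j + e).+1).
by rewrite addnS /= {1}hs -catA.
Qed.

Lemma size_joined j : (j < size (joined j))%N.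
Proof. by rewrite (joined_spec j).2; have := block_start_ge j; have := (hw j).2; nia. Qed.

(* The limit of the increasing words joined j. *)
Definition shadow : seqA A := fun k => nth (x 0%N) (joined k) k.

(* The shadow extends every joined word, so it lies in Y by closedness. *)
Lemma shadow_nth j k : (k < size (joined j))%N -> shadow k = nth (x 0%N) (joined j) k.
Proof.
move=> hk; have [s1 hs1] := joined_prefix k j; have [s2 hs2] := joined_prefix j k.
have e1 : shadow k = nth (x 0%N) (joined k ++ s1) k by rewrite nth_cat size_joined.
by rewrite e1 -hs1 addnC hs2 nth_cat hk.
Qed.

Lemma shadow_in : Y shadow.
Proof.
have [_ [cY _]] := sY; apply: cY => L.
have [y' [hy' hw']] := inL_point sY (joined_spec L).1.
exists y'; split => // i hi.
have hiL : (i < size (joined L))%N by have := size_joined L; lia.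
by rewrite (shadow_nth hiL) -hw' nth_word.
Qed.

Lemma shadow_agrees j t : (t < size (w j) - K)%N ->
  shadow (block_start j + t)%N = x (block_start j + t)%N.
Proof.
move=> ht; have [pre [hZ hpre]] := joined_last j.
have hlt : (block_start j + t < size (joined j))%N by rewrite (joined_spec j).2; lia.
rewrite (shadow_nth hlt) hZ nth_cat hpre ltnNge leq_addr /= addKn.
by rewrite /truncated nth_take // hcat //; lia.
Qed.

Lemma shadow_block_mismatch j :
  (mismatch_in x shadow (block_start j) (size (w j)) <= K)%N.
Proof.
have hK := (hw j).2; rewrite /mismatch_in.
rewrite (_ : size (w j) = (size (w j) - K) + K)%N; last by lia.
rewrite iotaD count_cat (eq_in_count (a2 := pred0)) ?count_pred0.
  by rewrite add0n; apply: leq_trans (count_size _ _) _; rewrite size_iota.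
move=> k; rewrite mem_iota => /andP [h1 h2] /=.
rewrite (_ : k = block_start j + (k - block_start j))%N; last by lia.
by rewrite shadow_agrees ?eqxx //; lia.
Qed.

Lemma shadow_mismatch t : (mismatch x shadow t <= K * (t %/ N) + K)%N.
Proof.
have hblocks j : (mismatch x shadow (block_start j) <= j * K)%N.
  elim: j => [|j IH]; first by rewrite /block_start big_ord0.
  by rewrite block_startS mismatch_add mulSnr; have := shadow_block_mismatch j; lia.
have [j hj] : exists j, (block_start j <= t < block_start j.+1)%N.
  elim: t => [|t [j hj]].
    by exists 0%N; rewrite block_startS /block_start big_ord0; have := (hw 0%N).2; lia.
  case: (ltnP t.+1 (block_start j.+1)) => h; first by exists j; lia.
  by exists j.+1; rewrite (block_startS j.+1); have := (hw j.+1).2; lia.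
have hjN : (j <= t %/ N)%N by rewrite leq_divRL; [have := block_start_ge j |]; lia.
apply: (leq_trans (mismatch_mono x shadow (ltnW (proj2 (andP hj))))).
apply: (leq_trans (hblocks j.+1)); rewrite mulSn addnC leq_add2r mulnC.
by rewrite leq_mul2l hjN orbT.
Qed.

Lemma gap_shadowing : exists y, Y y /\ (dbar x y <= INR K / INR N)%R.
Proof.
exists shadow; split; first exact: shadow_in.
have hN : (0 < INR N)%R by apply: lt_0_INR; lia.
apply: (dbar_le_affine (K := K)); first by apply: Rdiv_le_0_compat => //; apply: pos_INR.
move=> n hn.
have h1 : (INR (mismatch x shadow n) <= INR K * INR (n %/ N) + INR K)%R.
  by rewrite -mult_INR -plus_INR; apply: le_INR; apply/leP; exact: shadow_mismatch.
have h2 : (INR (n %/ N) * INR N <= INR n)%R.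
  by rewrite -mult_INR; apply: le_INR; apply/leP; exact: leq_divM.
have hK : (0 <= INR K)%R by apply: pos_INR.
have -> : (INR K / INR N * INR n = INR K * (INR n / INR N))%R by field; lra.
have : (INR (n %/ N) <= INR n / INR N)%R.
  by apply: (Rmult_le_reg_r (INR N)) => //; rewrite /Rdiv Rmult_assoc Rinv_l; lra.
nra.
Qed.

End GapShadowing.

Lemma i_to_ii (A : finType) (X : seqA A -> Prop) : shift_space X ->
  (exists Xs : nat -> (seqA A -> Prop),
      (forall n, sofic_shift (Xs n) /\ top_mixing (Xs n)) /\
      (forall n x, Xs n.+1 x -> Xs n x) /\
      (forall x, X x <-> forall n, Xs n x) /\
      is_lim_seq (fun n => dbarH X (Xs n)) (Rbar.Finite R0)) ->
  (forall x, X x <-> exists y, X y /\ shift y = x) /\ dbar_shadowing X.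
Proof.
move=> sX [Xs [hs [hdesc [hX hlim]]]]; split.
  by apply: inter_mixing_onto hdesc hX => // n; have [[sY _] hm] := hs n.
move=> eps he.
have [n0 hn0] := proj2 (is_lim_seq_spec _ _) hlim (mkposreal (eps / 2) ltac:(lra)).
have hH : (dbarH X (Xs n0) < eps / 2)%R.
  by have := hn0 n0 (le_n n0); rewrite /= Rminus_0_r; apply: Rle_lt_trans; apply: Rle_abs.
have [[sY [nV [nE [src [tgt [lab hY]]]]]] hmix] := hs n0.
have [K hK] := mixing_sofic_uniform_gap hY hmix.
have [M hM] := INR_archimed (eps / 2) (INR K) ltac:(lra).
set N := maxn M K.+1.
exists N; split => [|w x hw hcat]; first by lia.
have hXY z : X z -> Xs n0 z by rewrite hX.
have [y [hy hdy]] := gap_shadowing hXY sY hK (ltac:(lia) : (K < N)%N) hw hcat.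
have [x' [hx' hdx']] := dbarH_close sX.1 hy hH.
exists x'; split => //.
have hNpos : (0 < INR N)%R by apply: lt_0_INR; lia.
have hMN : (INR M <= INR N)%R by apply: le_INR; apply/leP; lia.
have hq : (INR K / INR N < eps / 2)%R.
  by apply: (Rmult_lt_reg_r (INR N)) => //; rewrite /Rdiv Rmult_assoc Rinv_l; nra.
by have := dbar_tri x y x'; lra.
Qed.
Section ShadowingToChainMixing.
Variable A : finType.
Implicit Types (X : seqA A -> Prop) (x y : seqA A).

Lemma concat_blocks x m : (0 < m)%N -> is_concat (fun j => word x (j * m) m) x.
Proof.
move=> hm j i; rewrite size_word => hi.
rewrite (eq_bigr (fun _ => m)); last by move=> l _; rewrite size_word.
by rewrite sum_nat_const card_ord nth_word.
Qed.

(* (ii) implies approachability: a point of the n-th Markov approximation is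
   a concatenation of (n+1)-words of X, which shadowing approximates. *)
Lemma shadowing_approachable X : shift_space X -> dbar_shadowing X -> dbar_approachable X.
Proof.
move=> sX hsh; apply/is_lim_seq_spec => eps; have he := cond_pos eps.
have [N [hN0 hN]] := hsh (eps / 2)%R ltac:(lra).
exists N => n /leP hn.
have hmne : exists a, markov_approx X n a.
  by have [a ha] := sX.1; exists a; apply: X_sub_markov.
have hle : (dbarH (markov_approx X n) X <= eps / 2)%R.
  apply: dbarH_le => //; [exact: sX.1 | move=> a ha | move=> b hb]; last first.
    by exists b; split; [exact: X_sub_markov | rewrite dbar_refl; lra].
  have hw j : inL X (word a (j * n.+1) n.+1) /\ (N <= size (word a (j * n.+1) n.+1))%N.
    by split; [apply: ha | rewrite size_word; lia].
  by have [b [hb hd]] := hN _ _ hw (@concat_blocks a n.+1 (ltn0Sn n)); exists b; split => //; lra.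
have h0 := dbarH_ge0 hmne sX.1.
by rewrite Rminus_0_r Rabs_pos_eq //; lra.
Qed.

Definition alt_blocks x0 x1 la lb c j : seq A :=
  if odd j then word x1 c lb else word x0 0 la.

Definition alt_point x0 x1 la lb c : seqA A :=
  fun k => if (k %% (la + lb) < la)%N then x0 (k %% (la + lb))%N
           else x1 (c + k %% (la + lb) - la)%N.

Lemma alt_point_A x0 x1 la lb c j u : (u < la)%N ->
  alt_point x0 x1 la lb c (j * (la + lb) + u)%N = x0 u.
Proof. by move=> h; rewrite /alt_point modnMDl modn_small ?h //; lia. Qed.

Lemma alt_point_B x0 x1 la lb c j u : (la <= u < la + lb)%N ->
  alt_point x0 x1 la lb c (j * (la + lb) + u)%N = x1 (c + u - la)%N.
Proof. by case/andP=> h1 h2; rewrite /alt_point modnMDl modn_small // ltnNge h1. Qed.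

Lemma concat_alt x0 x1 la lb c : (0 < la)%N ->
  is_concat (alt_blocks x0 x1 la lb c) (alt_point x0 x1 la lb c).
Proof.
move=> ha j i hi.
have -> : (\sum_(l < j) size (alt_blocks x0 x1 la lb c l) = j./2 * (la + lb) + odd j * la)%N.
  elim: j {hi} => [|j IH]; first by rewrite big_ord0.
  have e : (j.+1)./2 = (j./2 + odd j)%N.
    have := odd_double_half j.+1; have := odd_double_half j; rewrite /=.
    by case: (odd j) => /=; lia.
  by rewrite big_ord_recr IH e /alt_blocks mulnDl /=; case: (odd j) => /=; rewrite size_word; lia.
move: hi; rewrite /alt_blocks; case: (odd j) => /=; rewrite size_word => hi.
  by rewrite mul1n -addnA alt_point_B ?nth_word //; [congr x1 |]; lia.
by rewrite mul0n addn0 alt_point_A ?nth_word.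
Qed.

Lemma window_mismatches x y s n q :
  (forall r, (r < q)%N -> exists t, (t <= n)%N /\
      x (s + r * n.+1 + t)%N != y (s + r * n.+1 + t)%N) ->
  (q <= mismatch_in x y s (q * n.+1))%N.
Proof.
elim: q => [|q IH] h //; rewrite mulSnr /mismatch_in iotaD count_cat.
have h1 := IH (fun r hr => h r (ltnW hr)).
suff : (0 < count (fun j => x j != y j) (iota (s + q * n.+1) n.+1))%N.
  by rewrite /mismatch_in in h1; lia.
have [t [ht hne]] := h q (ltnSn q); rewrite -has_count; apply/hasP.
by exists (s + q * n.+1 + t)%N => //; rewrite mem_iota; lia.
Qed.

Lemma agreeing_window x y s n q : (mismatch_in x y s (q * n.+1) < q)%N ->
  exists t, (t + n < q * n.+1)%N /\
    forall r, (r <= n)%N -> x (s + t + r)%N = y (s + t + r)%N.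
Proof.
move=> hlt; apply: NNPP => hno; move: hlt; rewrite ltnNge => /negP; apply.
apply: window_mismatches => r hr; apply: NNPP => hne; apply: hno.
exists (r * n.+1)%N; split; first by nia.
move=> t ht; apply: NNPP => hneq; apply: hne; exists t; split => //.
by apply/eqP.
Qed.

Lemma inv_le_div (a b c : R) : (0 < c)%R -> (0 < b)%R -> (b <= a * c)%R -> (/ c <= a / b)%R.
Proof.
move=> hc hb h; have -> : (/ c = (b / c) / b)%R by field; lra.
apply: Rmult_le_compat_r; first by apply: Rlt_le; apply: Rinv_0_lt_compat.
by apply: (Rmult_le_reg_r c) => //; rewrite /Rdiv Rmult_assoc Rinv_l; lra.
Qed.

Lemma sparse_period x y n q P :
  (0 < P)%N -> (P <= 4 * n.+1 * q)%N -> (dbar x y < / INR (4 * n.+1))%R ->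
  exists j, (mismatch_in x y (j * P) P < q)%N.
Proof.
move=> hP hPq hd; apply: NNPP => hno.
have hm j : (j * q <= mismatch x y (j * P))%N.
  elim: j => [|j IH] //; rewrite !mulSnr mismatch_add.
  have hj : ~ (mismatch_in x y (j * P) P < q)%N by move=> h; apply: hno; exists j.
  by move/negP: hj; rewrite -leqNgt; lia.
have [N0 hN0] := @ratio_eventually_lt A x y (/ INR (4 * n.+1) - dbar x y) ltac:(lra).
have h4 : (0 < INR (4 * n.+1))%R by apply: lt_0_INR; lia.
have hNP : (0 < INR (N0.+1 * P))%R by apply: lt_0_INR; nia.
have hcount : (INR (N0.+1 * P) <= INR (mismatch x y (N0.+1 * P)) * INR (4 * n.+1))%R.
  by rewrite -mult_INR; apply: le_INR; apply/leP; have := hm N0.+1; nia.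
have := hN0 (N0.+1 * P)%N ltac:(nia); rewrite /ratio.
have := inv_le_div h4 hNP hcount; lra.
Qed.

Lemma glue_twice X n z0 z1 z2 t1 t2 :
  markov_approx X n z0 -> markov_approx X n z1 -> markov_approx X n z2 ->
  overlap z0 z1 t1 n -> overlap z1 z2 (t2 - t1) n -> (t1 <= t2)%N ->
  exists H, [/\ markov_approx X n H, forall k, (k <= t1 + n)%N -> H k = z0 k
              & forall k, (t2 <= k)%N -> H k = z2 (k - t2)%N].
Proof.
move=> h0 h1 h2 hov1 hov2 ht.
have hov : overlap (glue z0 z1 t1 n) z2 t2 n.
  move=> r hr; rewrite glue_right //; last by lia.
  by rewrite (_ : (t2 + r - t1) = (t2 - t1) + r)%N ?hov2 //; lia.
exists (glue (glue z0 z1 t1 n) z2 t2 n); split.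
- by apply: glue_markov => //; exact: glue_markov.
- by move=> k hk; rewrite !glue_left //; lia.
- by move=> k hk; rewrite glue_right.
Qed.

Section Chains.
Variables (X : seqA A -> Prop) (sX : shift_space X)
  (hsurj : forall x, X x <-> exists y, X y /\ shift y = x)
  (hsh : dbar_shadowing X).

Lemma onto_left_extension y L : X y -> exists z, X z /\ forall j, z (L + j)%N = y j.
Proof.
move=> hy; elim: L => [|L [z [hz hzy]]]; first by exists y.
have [z' [hz' e]] := (hsurj z).1 hz; exists z'; split => // j.
by rewrite -hzy -e /shift addSn.
Qed.

(* Shadow the periodic concatenation of the blocks x0[0, la) and x1[c, c + lb)
   (la = q (n+1) <= lb) by a point x' of X.  Its mismatch density is so low
   that in some period, starting at s, x' agrees with the first block on a
   full window at t1 and with the second block on a full window at t2; these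
   windows are the overlaps along which x0, x' and x1 can be glued. *)
Lemma shadow_windows n N q lb c x0 x1 :
  (forall w x, (forall j, inL X (w j) /\ (N <= size (w j))%N) -> is_concat w x ->
     exists x', X x' /\ (dbar x x' < / INR (4 * n.+1))%R) ->
  X x0 -> X x1 -> (0 < q)%N -> (N <= q * n.+1)%N -> (q * n.+1 <= lb)%N ->
  (q * n.+1 + lb <= 4 * n.+1 * q)%N ->
  exists x' s t1 t2, [/\ X x', (t1 + n < q * n.+1 <= t2)%N,
    (t2 + n < q * n.+1 + lb)%N,
    overlap x0 (tail_from x' (s + t1)) t1 n &
    overlap (tail_from x' (s + t1)) (tail_from x1 (c + t2 - q * n.+1)) (t2 - t1) n].
Proof.
move=> hN hx0 hx1 hq hNla hlalb hPq; set la := (q * n.+1)%N in hNla hlalb hPq *.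
set x := alt_point x0 x1 la lb c.
have hw j : inL X (alt_blocks x0 x1 la lb c j) /\ (N <= size (alt_blocks x0 x1 la lb c j))%N.
  by rewrite /alt_blocks; case: (odd j); rewrite size_word; (split; [apply: inL_word | lia]).
have hla : (0 < la)%N by rewrite muln_gt0 hq.
have [x' [hx' hd]] := hN _ _ hw (concat_alt (x0 := x0) (x1 := x1) (lb := lb) (c := c) hla).
have [j hj] := sparse_period (ltac:(lia) : (0 < la + lb)%N) hPq hd.
set s := (j * (la + lb))%N in hj.
have hjA : (mismatch_in x x' s la < q)%N.
  by apply: leq_ltn_trans hj; apply: mismatch_in_sub; lia.
have hjB : (mismatch_in x x' (s + la) la < q)%N.
  by apply: leq_ltn_trans hj; apply: mismatch_in_sub; lia.
have [t1 [ht1 he1]] := agreeing_window hjA.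
have [t [ht he2]] := agreeing_window hjB.
exists x', s, t1, (la + t)%N; split => //; first (apply/andP; split); try lia.
  move=> r hr; rewrite /tail_from -he1 // /x /s -addnA.
  by rewrite alt_point_A //; lia.
move=> r hr; rewrite /tail_from.
rewrite (_ : (s + t1 + (la + t - t1 + r)) = s + la + t + r)%N; last by lia.
by rewrite -he2 // /x /s -!addnA alt_point_B; [congr x1 |]; lia.
Qed.

(* Any two (n+1)-words a, b of X are joined by chains of the n-th Markov
   approximation of every sufficiently large length m: glue the points reading
   a and b along the windows of shadow_windows, with period m + n + 1. *)
Lemma chain_between n : exists M0, forall a b m, inL X a -> size a = n.+1 ->
  inL X b -> size b = n.+1 -> (M0 <= m)%N ->
  exists H, [/\ markov_approx X n H, word H 0 n.+1 = a & word H m n.+1 = b].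
Proof.
have heps : (0 < / INR (4 * n.+1))%R by apply: Rinv_0_lt_compat; apply: lt_0_INR; lia.
have [N [hN0 hN]] := hsh heps.
exists (4 * n.+1 * N.+1)%N => a b m ha hsa hb hsb hm.
set P := (m + n.+1)%N; set q := (P %/ (2 * n.+1))%N; set lb := (P - q * n.+1)%N.
have hq1 : (q * (2 * n.+1) <= P)%N by apply: leq_divM.
have hq2 : (P < q.+1 * (2 * n.+1))%N by apply: ltn_ceil.
have hq0 : (0 < q)%N by rewrite divn_gt0 //; lia.
have [x0 [hx0 ha0]] := inL_point sX ha.
have [y1 [hy1 hb1]] := inL_point sX hb.
have [x1 [hx1 hx1y]] := onto_left_extension lb hy1.
have [x' [s [t1 [t2 [hx' /andP [ht1 ht2] ht2P he1 he2]]]]] :=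
  @shadow_windows n N q lb n.+1 x0 x1 hN hx0 hx1 hq0 ltac:(nia) ltac:(nia) ltac:(nia).
have [H [hH hH0 hH2]] := glue_twice (X_sub_markov n hx0)
  (markov_tail_from (s + t1) (X_sub_markov n hx'))
  (markov_tail_from (n.+1 + t2 - q * n.+1) (X_sub_markov n hx1)) he1 he2 ltac:(lia).
exists H; split => //.
  by rewrite -ha0 hsa; apply: word_ext => u hu; rewrite hH0 //; lia.
rewrite -hb1 hsb; apply: word_ext => u hu; rewrite hH2; last by lia.
by rewrite /tail_from -hx1y; congr x1; lia.
Qed.

(* Chains between the extremal (n+1)-words of u and w give mixing. *)
Lemma markov_mixing n : top_mixing (markov_approx X n).
Proof.
move=> u w [y1 [hy1 [i1 hu]]] [y2 [hy2 [i2 hw]]].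
have [M0 hM0] := chain_between n.
exists (M0 + n.+1)%N => m hm; set p0 := (i1 + size u)%N.
have [H [hH hHa hHb]] := hM0 (word y1 p0 n.+1) (word y2 i2 n.+1) m (hy1 p0)
   (size_word _ _ _) (hy2 i2) (size_word _ _ _) ltac:(lia).
have ov1 : overlap y1 H p0 n.
  by move=> t ht; have := word_eq_nth hHa (ltac:(lia) : (t < n.+1)%N); rewrite add0n.
have ov2 : overlap H (tail_from y2 i2) (p0 + m - p0) n.
  by move=> t ht; rewrite addKn; exact: word_eq_nth hHb t (ltac:(lia) : (t < n.+1)%N).
have [Y [hY hY1 hY2]] := glue_twice hy1 hH (markov_tail_from i2 hy2) ov1 ov2 (leq_addr m p0).
exists (word Y p0 m); split; first by rewrite size_word.
exists Y; split => //; exists i1; rewrite !size_cat size_word !word_cat.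
congr (_ ++ _ ++ _).
- by rewrite -[in RHS]hu; apply: word_ext => j hj; rewrite hY1 //; lia.
- by rewrite -[in RHS]hw; apply: word_ext => j hj; rewrite hY2 /tail_from; [congr y2 |]; lia.
Qed.

End Chains.

Lemma ii_to_iii X : shift_space X ->
  (forall x, X x <-> exists y, X y /\ shift y = x) /\ dbar_shadowing X ->
  chain_mixing X /\ dbar_approachable X.
Proof.
move=> sX [hs hsh]; split; last exact: shadowing_approachable.
by exists 0%N => n _; apply: markov_mixing.
Qed.

End ShadowingToChainMixing.

Theorem mainTheorem3 (A : finType) (X : seqA A -> Prop) :
  shift_space X ->
  let cond_i :=
    exists Xs : nat -> (seqA A -> Prop),
      (forall n, sofic_shift (Xs n) /\ top_mixing (Xs n)) /\
      (forall n x, Xs n.+1 x -> Xs n x) /\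
      (forall x, X x <-> forall n, Xs n x) /\
      is_lim_seq (fun n => dbarH X (Xs n)) (Rbar.Finite R0) in
  let cond_ii :=
    (forall x, X x <-> exists y, X y /\ shift y = x) /\ dbar_shadowing X in
  let cond_iii := chain_mixing X /\ dbar_approachable X in
  (cond_i <-> cond_ii) /\ (cond_ii <-> cond_iii).
Proof.
move=> sX cond_i cond_ii cond_iii.
have i_ii : cond_i -> cond_ii := i_to_ii sX.
have ii_iii : cond_ii -> cond_iii := ii_to_iii sX.
have iii_i : cond_iii -> cond_i := iii_to_i sX.
by split; split; auto.
Qed.
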